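(* For $t\in(0,1)$ and $c\in\mathbb{R}$ define the $2\times2$ matrix $\mathcal{C}_1(c,t)$ with entries $(\mathcal{C}_1)_{11}=24c-\frac{\sqrt3}{12}-\frac{3\sqrt2}{8}-\frac34$, $(\mathcal{C}_1)_{12}=24c-\frac{\sqrt3t+\sqrt3}{3(t+1)^3}-\frac{3(t+3)}{(3t^2+2t+3)^{3/2}}+\frac{3(t-3)}{(3t^2-2t+3)^{3/2}}-\frac{\sqrt3t-\sqrt3}{3(t-1)^3}$, $(\mathcal{C}_1)_{21}=24ct-\frac{\sqrt3t+\sqrt3}{3(t+1)^3}-\frac{3(3t+1)}{(3t^2+2t+3)^{3/2}}-\frac{3(3t-1)}{(3t^2-2t+3)^{3/2}}+\frac{\sqrt3t-\sqrt3}{3(t-1)^3}$, $(\mathcal{C}_1)_{22}=24ct-\frac{2\sqrt3+9\sqrt2+18}{24t^2}$, so that $\det\mathcal{C}_1=\gamma_1(t)c+\gamma_0(t)$ with $$\gamma_1(t)=-\left((2\sqrt3+9\sqrt2+18)t-\frac{72(t^2+6t+1)}{(3t^2+2t+3)^{3/2}}+\frac{72(t^2-6t+1)}{(3t^2-2t+3)^{3/2}}-\frac{8\sqrt3}{t+1}-\frac{8\sqrt3}{t-1}+\frac{2\sqrt3+9\sqrt2+18}{t^2}\right),$$ $$\begin{aligned}\gamma_0(t)=&-\frac{9(3t+1)(t+3)}{(3t^2+2t+3)^3}+\frac{9(3t-1)(t-3)}{(3t^2-2t+3)^3}+\frac{6\sqrt3\sqrt2+12\sqrt3+54\sqrt2+83}{96t^2}\\&-\frac{4\sqrt3}{(3t^2+2t+3)^{3/2}(t+1)}-\frac{2\sqrt3}{(3t^2-2t+3)^{3/2}(t+1)}-\frac{2\sqrt3}{(3t^2+2t+3)^{3/2}(t-1)}-\frac{4\sqrt3}{(3t^2-2t+3)^{3/2}(t-1)}\\&-\frac{144t}{(3t^2+2t+3)^{3/2}(3t^2-2t+3)^{3/2}}-\frac{1}{3(t+1)^4}+\frac{1}{3(t-1)^4}.\end{aligned}$$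 Then: (i) $\gamma_1(t)<0$ for $t\in(0,1)$; (ii) $\gamma_0(t)>0$ for $t\in(0,1)$; (iii) $c(t):=-\gamma_0(t)/\gamma_1(t)>0$ for $t\in(0,1)$; (iv) $(\mathcal{C}_1)_{11}(c(t),t)>0$ for $t\in(0,1)$; (v) there exists $\delta<1$ such that $(\mathcal{C}_1)_{12}(c(t),t)<0$ for $t\in(0,\delta)$ and $(\mathcal{C}_1)_{12}(c(t),t)>0$ for $t\in(\delta,1)$. *)

From Stdlib Require Import Reals.
Open Scope R_scope.

Definition p32 (x : R) : R := Rpower x (3/2).

Definition A (t : R) : R := 3*t^2 + 2*t + 3.
Definition B (t : R) : R := 3*t^2 - 2*t + 3.
Definition K : R := 2*sqrt 3 + 9*sqrt 2 + 18.

Definition C11 (c t : R) : R :=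
  24*c - sqrt 3 / 12 - 3*sqrt 2 / 8 - 3/4.
Definition C12 (c t : R) : R :=
  24*c - (sqrt 3 * t + sqrt 3) / (3*(t+1)^3) - 3*(t+3) / p32 (A t)
       + 3*(t-3) / p32 (B t) - (sqrt 3 * t - sqrt 3) / (3*(t-1)^3).
Definition C21 (c t : R) : R :=
  24*c*t - (sqrt 3 * t + sqrt 3) / (3*(t+1)^3) - 3*(3*t+1) / p32 (A t)
       - 3*(3*t-1) / p32 (B t) + (sqrt 3 * t - sqrt 3) / (3*(t-1)^3).
Definition C22 (c t : R) : R :=
  24*c*t - K / (24*t^2).

Definition detC1 (c t : R) : R := C11 c t * C22 c t - C12 c t * C21 c t.

Definition gamma1 (t : R) : R :=
  - (K*t - 72*(t^2 + 6*t + 1) / p32 (A t) + 72*(t^2 - 6*t + 1) / p32 (B t)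
     - 8*sqrt 3 / (t+1) - 8*sqrt 3 / (t-1) + K / t^2).

Definition gamma0 (t : R) : R :=
  - 9*(3*t+1)*(t+3) / (A t)^3 + 9*(3*t-1)*(t-3) / (B t)^3
  + (6*sqrt 3*sqrt 2 + 12*sqrt 3 + 54*sqrt 2 + 83) / (96*t^2)
  - 4*sqrt 3 / (p32 (A t) * (t+1)) - 2*sqrt 3 / (p32 (B t) * (t+1))
  - 2*sqrt 3 / (p32 (A t) * (t-1)) - 4*sqrt 3 / (p32 (B t) * (t-1))
  - 144*t / (p32 (A t) * p32 (B t))
  - 1 / (3*(t+1)^4) + 1 / (3*(t-1)^4).

Definition cstar (t : R) : R := - gamma0 t / gamma1 t.

(* Each sign claim reduces to the positivity of an explicit algebraic function of t on a
   closed interval.  Writing (3t^2 +- 2t + 3)^(3/2) as A sqrt A and multiplying by positive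
   weights t^2 (1-t)^k removes the poles at t = 0 and t = 1.  Since C11(c,t) = 24 (c - c0),
   C11(c*(t),t) has the sign of gamma0 + c0 gamma1; clearing it needs the cancellation of the
   t^-2 terms and a conjugate form of (A^(-3/2) - B^(-3/2)) / t.  The cleared functions are
   bounded away from zero by fixed-point interval arithmetic, proved sound once and run with
   bisection.  For (v), the cleared form of C12(c*(t),t) (-gamma1(t)) is negative on
   [0, 19/32], positive on [5/8, 1] and has positive derivative in between, so it changes
   sign exactly once. *)

From Stdlib Require Import Reals ZArith Lia Lra Psatz.
From Coquelicot Require Import Coquelicot.
Open Scope R_scope.

Inductive expr : Type :=
| EVar | EZ (z : Z) | EAdd (a b : expr) | ESub (a b : expr) | EMul (a b : expr)
| EDiv (a b : expr) | EOpp (a : expr) | EInv (a : expr) | ESqrt (a : expr)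
| EPow (a : expr) (n : nat).

Fixpoint eval (x : R) (e : expr) : R :=
  match e with
  | EVar => x
  | EZ z => IZR z
  | EAdd a b => eval x a + eval x b
  | ESub a b => eval x a - eval x b
  | EMul a b => eval x a * eval x b
  | EDiv a b => eval x a / eval x b
  | EOpp a => - eval x a
  | EInv a => / eval x a
  | ESqrt a => sqrt (eval x a)
  | EPow a n => eval x a ^ n
  end.

Definition den : Z := Eval vm_compute in (2 ^ 40)%Z.
Definition fxp (z : Z) : R := IZR z / IZR den.

Lemma den_pos : 0 < IZR den.
Proof. apply IZR_lt; reflexivity. Qed.

Lemma fxp_pos z : (0 < z)%Z -> 0 < fxp z.
Proof. intro H. apply Rdiv_lt_0_compat; [apply IZR_lt, H | apply den_pos]. Qed.

Lemma div_den2_le p q : (p <= q)%Z -> IZR p / IZR (den * den) <= IZR q / IZR (den * den).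
Proof.
  intro H. apply Rmult_le_compat_r; [|apply IZR_le, H].
  left. apply Rinv_0_lt_compat, IZR_lt. reflexivity.
Qed.

Lemma fxp_mul a b : fxp a * fxp b = IZR (a * b) / IZR (den * den).
Proof. unfold fxp. rewrite !mult_IZR. pose proof den_pos. field. lra. Qed.

Definition div_up (a d : Z) : Z := (- (- a / d))%Z.

Lemma fxp_div_le a d y : (0 < d)%Z -> IZR a / IZR (d * den) <= y -> fxp (a / d) <= y.
Proof.
  intros Hd Ha. rewrite mult_IZR in Ha. pose proof den_pos.
  assert (0 < IZR d) by (apply IZR_lt, Hd).
  assert (Hq : IZR (a / d) * IZR d <= IZR a).
  { rewrite <- mult_IZR. apply IZR_le. rewrite Z.mul_comm. apply Z.mul_div_le, Hd. }
  apply Rle_trans with (IZR a / (IZR d * IZR den)); [|exact Ha].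
  replace (fxp (a / d)) with (IZR (a / d) * IZR d / (IZR d * IZR den)) by (unfold fxp; field; lra).
  apply Rmult_le_compat_r; [left; apply Rinv_0_lt_compat; nra | exact Hq].
Qed.

Lemma fxp_div_up_ge a d y : (0 < d)%Z -> y <= IZR a / IZR (d * den) -> y <= fxp (div_up a d).
Proof.
  intros Hd Ha.
  assert (H : fxp (- a / d) <= - y).
  { apply fxp_div_le; [exact Hd|]. rewrite opp_IZR. unfold Rdiv in *. lra. }
  unfold div_up, fxp in *. rewrite opp_IZR. unfold Rdiv in *. lra.
Qed.

Definition itv : Type := Z * Z.
Definition in_itv (x : R) (i : itv) : Prop := fxp (fst i) <= x <= fxp (snd i).

Lemma in_itv_nonempty x i : in_itv x i -> (fst i <= snd i)%Z.
Proof.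
  intros [Hl Hh]. apply le_IZR. pose proof den_pos. unfold fxp in *.
  apply (Rmult_le_reg_r (/ IZR den)); [apply Rinv_0_lt_compat; lra | lra].
Qed.

Definition itv_add (i j : itv) : itv := (fst i + fst j, snd i + snd j)%Z.
Definition itv_opp (i : itv) : itv := (- snd i, - fst i)%Z.
Definition itv_sub (i j : itv) : itv := itv_add i (itv_opp j).

Lemma itv_add_correct x y i j : in_itv x i -> in_itv y j -> in_itv (x + y) (itv_add i j).
Proof. unfold in_itv, fxp, itv_add; simpl. rewrite !plus_IZR. unfold Rdiv. lra. Qed.

Lemma itv_opp_correct x i : in_itv x i -> in_itv (- x) (itv_opp i).
Proof. unfold in_itv, fxp, itv_opp; simpl. rewrite !opp_IZR. unfold Rdiv. lra. Qed.

Lemma itv_sub_correct x y i j : in_itv x i -> in_itv y j -> in_itv (x - y) (itv_sub i j).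
Proof. intros. apply itv_add_correct, itv_opp_correct; assumption. Qed.

Lemma Rmult_ge_corners a b c d x y m :
  a <= x <= b -> c <= y <= d ->
  m <= a * c -> m <= a * d -> m <= b * c -> m <= b * d -> m <= x * y.
Proof.
  intros [Hax Hxb] [Hcy Hyd] Hac Had Hbc Hbd.
  destruct (Rle_dec 0 y).
  - assert (a * y <= x * y) by nra. destruct (Rle_dec 0 a); nra.
  - assert (b * y <= x * y) by nra. destruct (Rle_dec 0 b); nra.
Qed.

Lemma Rmult_le_corners a b c d x y m :
  a <= x <= b -> c <= y <= d ->
  a * c <= m -> a * d <= m -> b * c <= m -> b * d <= m -> x * y <= m.
Proof.
  intros Hx Hy Hac Had Hbc Hbd.
  assert (- m <= - x * y) by (apply (Rmult_ge_corners (- b) (- a) c d); lra).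
  lra.
Qed.

Definition itv_mul (i j : itv) : itv :=
  let '(a, b) := i in let '(c, d) := j in
  (Z.min (Z.min (a * c) (a * d)) (Z.min (b * c) (b * d)) / den,
   div_up (Z.max (Z.max (a * c) (a * d)) (Z.max (b * c) (b * d))) den)%Z.

Lemma itv_mul_correct x y i j : in_itv x i -> in_itv y j -> in_itv (x * y) (itv_mul i j).
Proof.
  destruct i as [a b], j as [c d]. unfold in_itv, itv_mul; simpl. intros Hx Hy.
  split.
  - apply fxp_div_le; [reflexivity|].
    apply (Rmult_ge_corners (fxp a) (fxp b) (fxp c) (fxp d)); auto;
      rewrite fxp_mul; apply div_den2_le; lia.
  - apply fxp_div_up_ge; [reflexivity|].
    apply (Rmult_le_corners (fxp a) (fxp b) (fxp c) (fxp d)); auto;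
      rewrite fxp_mul; apply div_den2_le; lia.
Qed.

Fixpoint itv_pow (i : itv) (n : nat) : itv :=
  match n with
  | O => (den, den)
  | S n => itv_mul i (itv_pow i n)
  end.

Lemma itv_pow_correct x i n : in_itv x i -> in_itv (x ^ n) (itv_pow i n).
Proof.
  intro H. induction n as [|n IH]; simpl.
  - unfold in_itv, fxp; simpl. pose proof den_pos. unfold Rdiv. rewrite Rinv_r; lra.
  - apply itv_mul_correct; assumption.
Qed.

Definition itv_inv_pos (i : itv) : itv :=
  ((den * den) / snd i, div_up (den * den) (fst i))%Z.

Lemma itv_inv_pos_correct x i : (0 < fst i)%Z -> in_itv x i -> in_itv (/ x) (itv_inv_pos i).
Proof.
  destruct i as [a b]; unfold in_itv, itv_inv_pos; cbn [fst snd]. intros Ha Hx.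
  assert (Hb : (0 < b)%Z) by (pose proof (in_itv_nonempty x (a, b) Hx); simpl in *; lia).
  pose proof (fxp_pos a Ha).
  assert (Hrecip : forall z, (0 < z)%Z -> IZR (den * den) / IZR (z * den) = / fxp z).
  { intros z Hz. unfold fxp. rewrite !mult_IZR. pose proof den_pos.
    assert (0 < IZR z) by (apply IZR_lt, Hz). field. lra. }
  split.
  - apply fxp_div_le; [exact Hb|]. rewrite Hrecip by exact Hb. apply Rinv_le_contravar; lra.
  - apply fxp_div_up_ge; [exact Ha|]. rewrite Hrecip by exact Ha. apply Rinv_le_contravar; lra.
Qed.

Definition itv_inv (i : itv) : option itv :=
  if (0 <? fst i)%Z then Some (itv_inv_pos i)
  else if (snd i <? 0)%Z then Some (itv_opp (itv_inv_pos (itv_opp i)))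
  else None.

Lemma itv_inv_correct x i k : in_itv x i -> itv_inv i = Some k -> in_itv (/ x) k.
Proof.
  unfold itv_inv. intro Hx. destruct (Z.ltb_spec 0 (fst i)).
  - intro E. injection E as <-. apply itv_inv_pos_correct; assumption.
  - destruct (Z.ltb_spec (snd i) 0); [|discriminate]. intro E. injection E as <-.
    assert (Hneg : x < 0).
    { destruct Hx as [_ Hx]. pose proof (fxp_pos (- snd i) ltac:(lia)).
      unfold fxp in *. rewrite opp_IZR in *. unfold Rdiv in *. lra. }
    replace (/ x) with (- / - x) by (rewrite Rinv_opp; ring).
    apply itv_opp_correct, itv_inv_pos_correct.
    + destruct i; simpl in *; lia.
    + apply itv_opp_correct, Hx.
Qed.

Lemma sqrt_le_of_le_square r x : 0 <= r -> x <= r * r -> sqrt x <= r.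
Proof. intros. rewrite <- (sqrt_square r) by lra. apply sqrt_le_1_alt. lra. Qed.
Lemma le_sqrt_of_square_le r x : 0 <= r -> r * r <= x -> r <= sqrt x.
Proof. intros. rewrite <- (sqrt_square r) by lra. apply sqrt_le_1_alt. lra. Qed.

Definition itv_sqrt (i : itv) : option itv :=
  if (0 <=? fst i)%Z then Some (Z.sqrt (fst i * den), Z.sqrt_up (snd i * den))%Z
  else None.

Lemma itv_sqrt_correct x i k : in_itv x i -> itv_sqrt i = Some k -> in_itv (sqrt x) k.
Proof.
  unfold itv_sqrt. intro Hx. destruct (Z.leb_spec 0 (fst i)) as [Ha|]; [|discriminate].
  intro E. injection E as <-.
  pose proof (in_itv_nonempty x i Hx).
  destruct i as [a b]; unfold in_itv in *; simpl in *.
  assert (Hden : (0 < den)%Z) by reflexivity.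
  assert (Hsq : forall z, fxp z = IZR (z * den) / IZR (den * den)).
  { intro z. unfold fxp. rewrite !mult_IZR. pose proof den_pos. field. lra. }
  destruct (Z.sqrt_sqrt_up_spec (a * den) ltac:(nia)) as [Hlo _].
  destruct (Z.sqrt_sqrt_up_spec (b * den) ltac:(nia)) as [_ Hhi].
  split.
  - apply le_sqrt_of_square_le.
    + unfold fxp. apply Rdiv_le_0_compat; [apply IZR_le, Z.sqrt_nonneg | apply den_pos].
    + rewrite fxp_mul. apply Rle_trans with (fxp a); [|lra].
      rewrite Hsq. apply div_den2_le, Hlo.
  - apply sqrt_le_of_le_square.
    + unfold fxp. apply Rdiv_le_0_compat; [apply IZR_le, Z.sqrt_up_nonneg | apply den_pos].
    + rewrite fxp_mul. apply Rle_trans with (fxp b); [lra|].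
      rewrite Hsq. apply div_den2_le, Hhi.
Qed.

Fixpoint itv_eval (i : itv) (e : expr) : option itv :=
  let lift2 f a b :=
    match itv_eval i a, itv_eval i b with
    | Some j, Some k => f j k
    | _, _ => None
    end in
  match e with
  | EVar => Some i
  | EZ z => Some (z * den, z * den)%Z
  | EAdd a b => lift2 (fun j k => Some (itv_add j k)) a b
  | ESub a b => lift2 (fun j k => Some (itv_sub j k)) a b
  | EMul a b => lift2 (fun j k => Some (itv_mul j k)) a b
  | EDiv a b => lift2 (fun j k => option_map (itv_mul j) (itv_inv k)) a b
  | EOpp a => option_map itv_opp (itv_eval i a)
  | EInv a => match itv_eval i a with Some j => itv_inv j | None => None end
  | ESqrt a => match itv_eval i a with Some j => itv_sqrt j | None => None end
  | EPow a n => option_map (fun j => itv_pow j n) (itv_eval i a)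
  end.

Lemma itv_eval_correct x i e k : in_itv x i -> itv_eval i e = Some k -> in_itv (eval x e) k.
Proof.
  intro Hx. revert k.
  induction e as [| z | a IHa b IHb | a IHa b IHb | a IHa b IHb | a IHa b IHb
                  | a IHa | a IHa | a IHa | a IHa n];
    cbn -[itv_add itv_sub itv_mul itv_inv itv_sqrt itv_pow]; intros k E;
    repeat match type of E with
    | context [itv_eval i ?c] => destruct (itv_eval i c) eqn:?; [|discriminate]
    end.
  - injection E as <-. exact Hx.
  - injection E as <-. unfold in_itv, fxp; cbn [fst snd].
    rewrite mult_IZR. pose proof den_pos. unfold Rdiv. rewrite Rmult_assoc, Rinv_r; lra.
  - injection E as <-. apply itv_add_correct; auto.
  - injection E as <-. apply itv_sub_correct; auto.
  - injection E as <-. apply itv_mul_correct; auto.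
  - destruct (itv_inv _) eqn:Einv; [|discriminate]. injection E as <-.
    apply itv_mul_correct; [auto|]. eapply itv_inv_correct; eauto.
  - injection E as <-. apply itv_opp_correct; auto.
  - eapply itv_inv_correct; eauto.
  - eapply itv_sqrt_correct; eauto.
  - injection E as <-. apply itv_pow_correct; auto.
Qed.

Definition itv_pos (i : option itv) : bool :=
  match i with Some (l, _) => (0 <? l)%Z | None => false end.

Lemma itv_pos_correct x i e :
  in_itv x i -> itv_pos (itv_eval i e) = true -> 0 < eval x e.
Proof.
  intros Hx. unfold itv_pos. destruct (itv_eval i e) as [[l h]|] eqn:E; [|discriminate].
  intro Hl. apply Z.ltb_lt, fxp_pos in Hl.
  apply (itv_eval_correct x) in E; [|exact Hx]. destruct E as [E _]. cbn [fst] in E. lra.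
Qed.

Fixpoint bisect_pos (depth : nat) (e : expr) (lo hi : Z) : bool :=
  if itv_pos (itv_eval (lo, hi) e) then true
  else match depth with
  | O => false
  | S d => let mid := ((lo + hi) / 2)%Z in
           if bisect_pos d e lo mid then bisect_pos d e mid hi else false
  end.

Lemma bisect_pos_correct depth e lo hi :
  bisect_pos depth e lo hi = true -> forall x, fxp lo <= x <= fxp hi -> 0 < eval x e.
Proof.
  revert lo hi. induction depth as [|d IH]; intros lo hi B x Hx; cbn [bisect_pos] in B;
    destruct (itv_pos _) eqn:P; try exact (itv_pos_correct x (lo, hi) e Hx P).
  - discriminate.
  - destruct (bisect_pos d e lo _) eqn:B1; [|discriminate].
    destruct (Rle_dec x (fxp ((lo + hi) / 2))).
    + apply (IH _ _ B1). lra.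
    + apply (IH _ _ B). lra.
Qed.

Ltac reify x e :=
  lazymatch e with
  | x => constr:(EVar)
  | IZR ?z => constr:(EZ z)
  | R0 => constr:(EZ 0)
  | R1 => constr:(EZ 1)
  | ?a + ?b => let a := reify x a in let b := reify x b in constr:(EAdd a b)
  | ?a - ?b => let a := reify x a in let b := reify x b in constr:(ESub a b)
  | ?a * ?b => let a := reify x a in let b := reify x b in constr:(EMul a b)
  | ?a / ?b => let a := reify x a in let b := reify x b in constr:(EDiv a b)
  | - ?a => let a := reify x a in constr:(EOpp a)
  | / ?a => let a := reify x a in constr:(EInv a)
  | sqrt ?a => let a := reify x a in constr:(ESqrt a)
  | ?a ^ ?n => let a := reify x a in constr:(EPow a n)
  end.

(* Proves [0 < f x] for [fxp lo <= x <= fxp hi]; [lo] and [hi] are given as integers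
   (numerators over [den]) and [depth] bounds the number of bisections. *)
Ltac interval_pos x lo hi depth :=
  lazymatch goal with
  | |- 0 < ?f =>
    let e := reify x f in
    let lo := eval vm_compute in lo in
    let hi := eval vm_compute in hi in
    change (0 < eval x e);
    apply (bisect_pos_correct depth e lo hi); [vm_compute; reflexivity | unfold fxp, den; lra]
  end.

Lemma sign_change_point (f : R -> R) l a b r :
  l < a -> a <= b ->
  (forall t, l < t <= a -> f t < 0) ->
  (forall s t, a <= s -> s < t -> t <= b -> f s < f t) ->
  (forall t, b <= t < r -> 0 < f t) ->
  exists delta, a <= delta <= b /\
    (forall t, l < t < delta -> f t < 0) /\ (forall t, delta < t < r -> 0 < f t).
Proof.
  intros Hla Hab Hneg Hincr Hpos.
  set (E := fun x => a <= x <= b /\ f x <= 0).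
  assert (HaE : E a) by (split; [lra | left; apply Hneg; lra]).
  destruct (completeness E) as [delta [Hub Hlub]].
  - exists b. intros x [Hx _]. lra.
  - exists a. exact HaE.
  - assert (a <= delta) by (apply Hub, HaE).
    assert (delta <= b) by (apply Hlub; intros x [Hx _]; lra).
    exists delta. split; [lra | split; intros t Ht].
    + destruct (Rle_or_lt t a); [apply Hneg; lra|].
      destruct (Rlt_or_le (f t) 0) as [|Hft]; [assumption|].
      assert (delta <= t); [|lra].
      apply Hlub. intros x [Hx Hfx]. destruct (Rle_or_lt x t); [assumption|].
      pose proof (Hincr t x ltac:(lra) ltac:(lra) ltac:(lra)). lra.
    + destruct (Rle_or_lt b t); [apply Hpos; lra|].
      destruct (Rlt_or_le 0 (f t)) as [|Hft]; [assumption|].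
      assert (t <= delta) by (apply Hub; split; lra). lra.
Qed.

Lemma increasing_of_pos_derive (f : R -> R) a b :
  (forall x, a <= x <= b -> exists l, is_derive f x l /\ 0 < l) ->
  forall s t, a <= s -> s < t -> t <= b -> f s < f t.
Proof.
  intros Hd s t Has Hst Htb.
  apply (incr_function_le f a b (Derive f)); [| |exact Has|exact Hst|exact Htb];
    intros x Hax Hxb; destruct (Hd x (conj Hax Hxb)) as [l [Hl Hpos]];
    rewrite (is_derive_unique f x l Hl); assumption.
Qed.

Lemma A_pos t : 0 < A t.
Proof. unfold A. nra. Qed.
Lemma B_pos t : 0 < B t.
Proof. unfold B. nra. Qed.

Lemma p32_eq x : 0 < x -> p32 x = x * sqrt x.
Proof.
  intro H. unfold p32. replace (3/2) with (1 + /2) by field.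
  rewrite Rpower_plus, Rpower_1, Rpower_sqrt by exact H. reflexivity.
Qed.

Lemma p32_pos x : 0 < p32 x.
Proof. apply exp_pos. Qed.

Lemma p32_sqr x : 0 < x -> p32 x ^ 2 = x ^ 3.
Proof.
  intro H. rewrite p32_eq by exact H.
  replace ((x * sqrt x) ^ 2) with (x ^ 2 * (sqrt x * sqrt x)) by ring.
  rewrite sqrt_sqrt by lra. ring.
Qed.

Lemma detC1_eq c t : 0 < t < 1 -> detC1 c t = gamma1 t * c + gamma0 t.
Proof.
  intro Ht. apply Rminus_diag_uniq.
  assert (E : detC1 c t - (gamma1 t * c + gamma0 t) =
     (sqrt 3 * sqrt 3 - 3) * (1 / (144 * t^2) - 1 / (9 * (t+1)^4) + 1 / (9 * (t-1)^4))
     + (sqrt 2 * sqrt 2 - 2) * (9 / (64 * t^2))).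
  { unfold detC1, C11, C12, C21, C22, gamma1, gamma0, K.
    rewrite <- (p32_sqr (A t)), <- (p32_sqr (B t)) by (apply A_pos || apply B_pos).
    pose proof (p32_pos (A t)). pose proof (p32_pos (B t)).
    field. repeat split; lra. }
  rewrite E, !sqrt_sqrt by lra. ring.
Qed.

Definition invA32 (t : R) : R := / (A t * sqrt (A t)).
Definition invB32 (t : R) : R := / (B t * sqrt (B t)).

Ltac field_unit_interval t :=
  rewrite ?p32_eq by (apply A_pos || apply B_pos);
  pose proof (A_pos t); pose proof (B_pos t);
  pose proof (sqrt_lt_R0 _ (A_pos t)); pose proof (sqrt_lt_R0 _ (B_pos t));
  unfold A, B in *; field; repeat split; try lra; nra.

Definition gamma1_cleared (t : R) : R :=
  K*t^3*(1-t) + K*(1-t) - 72*(t^2+6*t+1)*invA32 t*t^2*(1-t)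
  + 72*(t^2-6*t+1)*invB32 t*t^2*(1-t) - 8*sqrt 3*t^2*(1-t)/(t+1) + 8*sqrt 3*t^2.

Lemma gamma1_cleared_eq t : 0 < t < 1 -> t^2 * (1-t) * - gamma1 t = gamma1_cleared t.
Proof. intro Ht. unfold gamma1, gamma1_cleared, invA32, invB32. field_unit_interval t. Qed.

Lemma gamma1_cleared_pos t : 0 <= t <= 1 -> 0 < gamma1_cleared t.
Proof.
  intro Ht. unfold gamma1_cleared, invA32, invB32, A, B, K.
  interval_pos t 0%Z den 20%nat.
Qed.

Definition gamma0_cleared (t : R) : R :=
  -9*(3*t+1)*(t+3)*t^2*(1-t)^4/(A t)^3 + 9*(3*t-1)*(t-3)*t^2*(1-t)^4/(B t)^3
  + (6*sqrt 3*sqrt 2 + 12*sqrt 3 + 54*sqrt 2 + 83)*(1-t)^4/96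
  - 4*sqrt 3*invA32 t*t^2*(1-t)^4/(t+1) - 2*sqrt 3*invB32 t*t^2*(1-t)^4/(t+1)
  + 2*sqrt 3*invA32 t*t^2*(1-t)^3 + 4*sqrt 3*invB32 t*t^2*(1-t)^3
  - 144*t^3*(1-t)^4*invA32 t*invB32 t - t^2*(1-t)^4/(3*(t+1)^4) + t^2/3.

Lemma gamma0_cleared_eq t : 0 < t < 1 -> t^2 * (1-t)^4 * gamma0 t = gamma0_cleared t.
Proof. intro Ht. unfold gamma0, gamma0_cleared, invA32, invB32. field_unit_interval t. Qed.

Lemma gamma0_cleared_pos t : 0 <= t <= 1 -> 0 < gamma0_cleared t.
Proof.
  intro Ht. unfold gamma0_cleared, invA32, invB32, A, B.
  interval_pos t 0%Z den 20%nat.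
Qed.

Lemma gamma1_neg t : 0 < t < 1 -> gamma1 t < 0.
Proof.
  intro Ht. pose proof (gamma1_cleared_eq t Ht). pose proof (gamma1_cleared_pos t ltac:(lra)).
  assert (0 < t^2 * (1-t)) by (apply Rmult_lt_0_compat; nra).
  nra.
Qed.

Lemma gamma0_pos t : 0 < t < 1 -> gamma0 t > 0.
Proof.
  intro Ht. pose proof (gamma0_cleared_eq t Ht). pose proof (gamma0_cleared_pos t ltac:(lra)).
  assert (0 < t^2 * (1-t)^4) by (apply Rmult_lt_0_compat; [nra | apply pow_lt; lra]).
  nra.
Qed.

Lemma cstar_pos t : 0 < t < 1 -> cstar t > 0.
Proof.
  intro Ht. pose proof (gamma1_neg t Ht). pose proof (gamma0_pos t Ht). unfold cstar.
  replace (- gamma0 t / gamma1 t) with (gamma0 t / - gamma1 t) by (field; lra).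
  apply Rdiv_lt_0_compat; lra.
Qed.

Definition c0 : R := (sqrt 3 / 12 + 3 * sqrt 2 / 8 + 3/4) / 24.

Lemma C11_eq c t : C11 c t = 24 * (c - c0).
Proof. unfold C11, c0. field. Qed.

(* The [t^-2] poles of [gamma0] and [c0 * gamma1] cancel. *)
Lemma gamma0_pole_coeff : 6*sqrt 3*sqrt 2 + 12*sqrt 3 + 54*sqrt 2 + 83 = 96 * c0 * K.
Proof.
  unfold c0, K. pose proof (sqrt_sqrt 2 ltac:(lra)). pose proof (sqrt_sqrt 3 ltac:(lra)). nra.
Qed.

(* [(A^{-3/2} - B^{-3/2}) / t] without its removable singularity at [t = 0]:
   conjugate by [A sqrt A + B sqrt B] and use [B^3 - A^3 = -4t (A^2 + A B + B^2)]. *)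
Definition invA32_sub_invB32_div (t : R) : R :=
  -4 * invA32 t * invB32 t * ((A t)^2 + A t * B t + (B t)^2)
  / (A t * sqrt (A t) + B t * sqrt (B t)).

Lemma invA32_sub_invB32_div_eq t : t <> 0 -> (invA32 t - invB32 t) / t = invA32_sub_invB32_div t.
Proof.
  intro Ht. unfold invA32_sub_invB32_div, invA32, invB32.
  pose proof (A_pos t). pose proof (B_pos t).
  pose proof (sqrt_lt_R0 _ (A_pos t)). pose proof (sqrt_lt_R0 _ (B_pos t)).
  pose proof (sqrt_sqrt (A t) ltac:(lra)) as Ea. pose proof (sqrt_sqrt (B t) ltac:(lra)) as Eb.
  set (a := sqrt (A t)) in *. set (b := sqrt (B t)) in *.
  assert (Hconj : (B t * b - A t * a) * (A t * a + B t * b) = -4 * t * ((A t)^2 + A t * B t + (B t)^2)).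
  { replace ((B t * b - A t * a) * (A t * a + B t * b)) with ((B t)^2 * (b * b) - (A t)^2 * (a * a)) by ring.
    rewrite Ea, Eb. unfold A, B. ring. }
  assert (Hs : 0 < A t * a + B t * b) by nra.
  replace (/ (A t * a) - / (B t * b)) with ((B t * b - A t * a) / (A t * a * (B t * b))) by (field; split; nra).
  replace (B t * b - A t * a) with (-4 * t * ((A t)^2 + A t * B t + (B t)^2) / (A t * a + B t * b))
    by (rewrite <- Hconj; field; lra).
  field. repeat split; nra.
Qed.

Definition gamma_c0_cleared (t : R) : R :=
  (1-t)^4*(-9)*((3*t^2+3)*(-4)*((A t)^2+A t*B t+(B t)^2)/((A t)^3*(B t)^3) + 10*(/(A t)^3 + /(B t)^3))
  + 12*sqrt 3*invA32 t*(1-t)^3/(1+t)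
  + (-4*sqrt 3*(1-t)^3 + 2*sqrt 3*(1-t)^4/(t+1))*invA32_sub_invB32_div t
  - 144*invA32 t*invB32 t*(1-t)^4 + (8*t^2+8)/(3*(1+t)^4)
  + c0*(-K*(1-t)^4 + 864*invA32 t*(1-t)^4 + 72*(t^2-6*t+1)*invA32_sub_invB32_div t*(1-t)^4)
  - c0*16*sqrt 3*(1-t)^3/(1+t).

Lemma gamma_c0_cleared_eq t : 0 < t < 1 -> (1-t)^4 * (gamma0 t + c0 * gamma1 t) = t * gamma_c0_cleared t.
Proof.
  intro Ht. unfold gamma0. rewrite gamma0_pole_coeff.
  unfold gamma_c0_cleared. rewrite <- invA32_sub_invB32_div_eq by lra.
  unfold gamma1, invA32, invB32. field_unit_interval t.
Qed.

Lemma gamma_c0_cleared_pos t : 0 <= t <= 1 -> 0 < gamma_c0_cleared t.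
Proof.
  intro Ht. unfold gamma_c0_cleared, invA32_sub_invB32_div, c0, invA32, invB32, A, B, K.
  interval_pos t 0%Z den 20%nat.
Qed.

Lemma C11_cstar_pos t : 0 < t < 1 -> C11 (cstar t) t > 0.
Proof.
  intro Ht. pose proof (gamma1_neg t Ht).
  pose proof (gamma_c0_cleared_eq t Ht). pose proof (gamma_c0_cleared_pos t ltac:(lra)).
  assert (0 < (1-t)^4) by (apply pow_lt; lra).
  assert (0 < gamma0 t + c0 * gamma1 t) by nra.
  rewrite C11_eq. unfold cstar.
  replace (24 * (- gamma0 t / gamma1 t - c0)) with (24 * (gamma0 t + c0 * gamma1 t) / - gamma1 t)
    by (field; lra).
  apply Rdiv_lt_0_compat; lra.
Qed.

Definition C12_zero_cleared (t : R) : R :=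
  - sqrt 3 * (1-t)^3 / (3 * (t+1)^2) - 3 * (t+3) * invA32 t * (1-t)^3
  + 3 * (t-3) * invB32 t * (1-t)^3 - sqrt 3 * (1-t) / 3.

Lemma C12_affine c t : C12 c t = 24 * c + C12 0 t.
Proof. unfold C12. ring. Qed.

Lemma C12_zero_cleared_eq t : 0 < t < 1 -> (1-t)^3 * C12 0 t = C12_zero_cleared t.
Proof. intro Ht. unfold C12, C12_zero_cleared, invA32, invB32. field_unit_interval t. Qed.

Definition C12_cstar_cleared (t : R) : R :=
  24 * gamma0_cleared t + C12_zero_cleared t * gamma1_cleared t.

Lemma C12_cstar_cleared_eq t : 0 < t < 1 ->
  C12_cstar_cleared t = t^2 * (1-t)^4 * - gamma1 t * C12 (cstar t) t.
Proof.
  intro Ht. pose proof (gamma1_neg t Ht).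
  unfold C12_cstar_cleared.
  rewrite <- gamma0_cleared_eq, <- gamma1_cleared_eq, <- C12_zero_cleared_eq by exact Ht.
  rewrite (C12_affine (cstar t)). unfold cstar. field. lra.
Qed.

Lemma C12_cstar_cleared_neg t : 0 <= t <= 19/32 -> C12_cstar_cleared t < 0.
Proof.
  intro Ht. enough (0 < - C12_cstar_cleared t) by lra.
  unfold C12_cstar_cleared, gamma0_cleared, gamma1_cleared, C12_zero_cleared, invA32, invB32, A, B, K.
  interval_pos t 0%Z (19 * 2^35)%Z 20%nat.
Qed.

Lemma C12_cstar_cleared_pos t : 5/8 <= t <= 1 -> 0 < C12_cstar_cleared t.
Proof.
  intro Ht.
  unfold C12_cstar_cleared, gamma0_cleared, gamma1_cleared, C12_zero_cleared, invA32, invB32, A, B, K.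
  interval_pos t (5 * 2^37)%Z den 20%nat.
Qed.

Ltac domain_pos :=
  repeat match goal with
  | |- _ /\ _ => split
  | |- True => exact I
  | |- _ <> 0 => apply Rgt_not_eq, Rlt_gt
  | |- 0 < _ * _ => apply Rmult_lt_0_compat
  | |- 0 < sqrt _ => apply sqrt_lt_R0
  | |- 0 < _ => nra
  end.

Lemma C12_cstar_cleared_derive_pos x : 19/32 <= x <= 5/8 ->
  exists l, is_derive C12_cstar_cleared x l /\ 0 < l.
Proof.
  intro Hx. eexists. split.
  - unfold C12_cstar_cleared, gamma0_cleared, gamma1_cleared, C12_zero_cleared, invA32, invB32, A, B, K.
    auto_derive; [domain_pos | reflexivity].
  - interval_pos x (19 * 2^35)%Z (5 * 2^37)%Z 25%nat.
Qed.

Theorem lemma6 :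
  (forall c t, 0 < t < 1 -> detC1 c t = gamma1 t * c + gamma0 t) /\
  (forall t, 0 < t < 1 -> gamma1 t < 0) /\
  (forall t, 0 < t < 1 -> gamma0 t > 0) /\
  (forall t, 0 < t < 1 -> cstar t > 0) /\
  (forall t, 0 < t < 1 -> C11 (cstar t) t > 0) /\
  (exists delta, delta < 1 /\
     (forall t, 0 < t < delta -> C12 (cstar t) t < 0) /\
     (forall t, delta < t < 1 -> C12 (cstar t) t > 0)).
Proof.
  split; [exact detC1_eq|]. split; [exact gamma1_neg|]. split; [exact gamma0_pos|].
  split; [exact cstar_pos|]. split; [exact C11_cstar_pos|].
  destruct (sign_change_point C12_cstar_cleared 0 (19/32) (5/8) 1) as [delta [Hdelta [Hneg Hpos]]].
  - lra.
  - lra.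
  - intros t Ht. apply C12_cstar_cleared_neg. lra.
  - apply increasing_of_pos_derive, C12_cstar_cleared_derive_pos.
  - intros t Ht. apply C12_cstar_cleared_pos. lra.
  - assert (Hweight : forall t, 0 < t < 1 -> 0 < t^2 * (1-t)^4 * - gamma1 t).
    { intros t Ht. pose proof (gamma1_neg t Ht).
      apply Rmult_lt_0_compat; [apply Rmult_lt_0_compat; [nra | apply pow_lt; lra] | lra]. }
    exists delta. split; [lra | split]; intros t Ht;
      pose proof (Hweight t ltac:(lra)); pose proof (C12_cstar_cleared_eq t ltac:(lra)).
    + pose proof (Hneg t Ht). nra.
    + pose proof (Hpos t Ht). nra.
Qed.
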